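(* Within the pseudovariety $\mathsf M$ of all finite monoids, every set $\Sigma$ of $\mathsf M$-pseudoidentities such that $[\![\Sigma]\!]$ consists of groups is h-strong.
   Context: $\mathsf M$ is the pseudovariety of finite monoids (signature: multiplication and $1$); $\Omega_A\mathsf M$ is the free profinite monoid on a finite set $A$. An $\mathsf M$-pseudoidentity is $u=v$ with $u,v\in\Omega_B\mathsf M$, $B$ finite; it holds in a finite monoid $T$ if both sides agree under every continuous homomorphism $\Omega_B\mathsf M\to T$; $[\![\Sigma]\!]$ is the class of finite monoids satisfying $\Sigma$. Provability: for finite $A$, $\Sigma_0\subseteq\Omega_A\mathsf M\times\Omega_A\mathsf M$ is the set of pairs $(\mathbf t(\varphi(u),w_1,\dots,w_n),\mathbf t(\varphi(v),w_1,\dots,w_n))$ with $u=v$ or $v=u$ in $\Sigma$ ($u,v\in\Omega_B\mathsf M$), $\varphi:\Omega_B\mathsf M\to\Omega_A\mathsf M$ a continuous homomorphism, $\mathbf t$ a monoid term, $w_i\in\Omega_A\mathsf M$; $\Sigma_{2\alpha+1}$ is the transitive closure of $\Sigma_{2\alpha}$, $\Sigma_{2\alpha+2}$ the topological closure of $\Sigma_{2\alpha+1}$, unions at limit ordinals; $u=v$ is provable from $\Sigma$ if $(u,v)\in\bigcup_\alpha\Sigma_\alpha$. $\Sigma$ is h-strong within $\mathsf M$ if every $\mathsf M$-pseudoidentity valid in $[\![\Sigma]\!]$ is provable from $\Sigma$. *)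

From mathcomp Require Import all_boot.
Set Implicit Arguments. Unset Strict Implicit. Unset Printing Implicit Defensive.

Record FinMon := {
  fcar :> finType;
  fmul : fcar -> fcar -> fcar;
  fone : fcar;
  fmulA : forall x y z, fmul x (fmul y z) = fmul (fmul x y) z;
  fmul1m : forall x, fmul fone x = x;
  fmulm1 : forall x, fmul x fone = x }.
Arguments fmul {f}. Arguments fone {f}.

Definition is_mhom (M N : FinMon) (h : M -> N) : Prop :=
  h fone = fone /\ forall x y, h (fmul x y) = fmul (h x) (h y).

Definition is_group (T : FinMon) : Prop :=
  forall x : T, exists y : T, fmul x y = fone /\ fmul y x = fone.

(* ---------- the free profinite monoid Omega_A M ----------
   realised (for A finite) as the monoid of A-ary implicit operations on M:
   families of operations on all finite monoids commuting with all monoid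
   homomorphisms; topology = pointwise (product) topology. *)
Record Omega (A : finType) := {
  oev : forall M : FinMon, (A -> M) -> M;
  onat : forall (M N : FinMon) (h : M -> N) (a : A -> M),
      is_mhom h -> h (oev a) = oev (h \o a) }.
Arguments oev {A} o M a.

Section OmegaOps.
Variable A : finType.

Lemma omul_nat (u v : Omega A) (M N : FinMon) (h : M -> N) (a : A -> M) :
  is_mhom h -> h (fmul (oev u M a) (oev v M a)) =
               fmul (oev u N (h \o a)) (oev v N (h \o a)).
Proof. move=> hh; case: (hh) => _ hM; rewrite hM; congr fmul; exact: onat. Qed.

Definition omul (u v : Omega A) : Omega A :=
  @Build_Omega A (fun M a => fmul (oev u M a) (oev v M a)) (@omul_nat u v).

Lemma oone_nat (M N : FinMon) (h : M -> N) (a : A -> M) :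
  is_mhom h -> h fone = fone.
Proof. by case. Qed.

Definition oone : Omega A := @Build_Omega A (fun M _ => fone) oone_nat.

(* u and v agree on all finite monoids with at most m elements: these sets
   form a base of the neighbourhoods of the (product/profinite) topology *)
Definition agree (m : nat) (u v : Omega A) : Prop :=
  forall (M : FinMon), #|M| <= m -> forall a : A -> M, oev u M a = oev v M a.

(* value of the monoid term t (a word in the variables x_0 = x, x_1..x_n)
   at x_0 := x, x_i := w_(i-1) *)
Definition eval_term (t : seq nat) (x : Omega A) (w : seq (Omega A)) : Omega A :=
  foldr omul oone [seq nth x (x :: w) i | i <- t].
End OmegaOps.

Definition cont_hom (B A : finType) (phi : Omega B -> Omega A) : Prop :=
  phi (oone B) = oone A /\
  (forall x y, phi (omul x y) = omul (phi x) (phi y)) /\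
  (forall u n, exists m, forall u', agree m u u' -> agree n (phi u) (phi u')).

Definition cont_hom_fin (B : finType) (T : FinMon) (phi : Omega B -> T) : Prop :=
  phi (oone B) = fone /\
  (forall x y, phi (omul x y) = fmul (phi x) (phi y)) /\
  (forall u, exists m, forall u', agree m u u' -> phi u = phi u').

Definition pseudoidentities := forall B : finType, Omega B -> Omega B -> Prop.

Definition holds_in (T : FinMon) (B : finType) (u v : Omega B) : Prop :=
  forall phi : Omega B -> T, cont_hom_fin phi -> phi u = phi v.

Definition models (Sigma : pseudoidentities) (T : FinMon) : Prop :=
  forall B u v, Sigma B u v -> holds_in T u v.

Definition Sigma0 (Sigma : pseudoidentities) (A : finType) (p q : Omega A) : Prop :=
  exists (B : finType) (u v : Omega B) (phi : Omega B -> Omega A)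
         (t : seq nat) (w : seq (Omega A)),
    (Sigma B u v \/ Sigma B v u) /\ cont_hom phi /\
    p = eval_term t (phi u) w /\ q = eval_term t (phi v) w.

(* union of the transfinite sequence Sigma_alpha = least subset of
   Omega_A x Omega_A containing Sigma_0, transitively closed and
   topologically closed *)
Inductive provable (Sigma : pseudoidentities) (A : finType) :
    Omega A -> Omega A -> Prop :=
| prov_base p q : Sigma0 Sigma p q -> provable Sigma p q
| prov_trans p q r : provable Sigma p q -> provable Sigma q r -> provable Sigma p r
| prov_closure p q :
    (forall m, exists p' q', provable Sigma p' q' /\ agree m p p' /\ agree m q q') ->
    provable Sigma p q.

Definition h_strong (Sigma : pseudoidentities) : Prop :=
  forall (A : finType) (u v : Omega A),
    (forall T : FinMon, models Sigma T -> holds_in T u v) -> provable Sigma u v.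

(* The two-element semilattice U1 is not a group, so it violates some
   pseudoidentity u = v of Sigma; substituting 1 for the letters valued 1 and
   z^omega for the others shows that Sigma proves z^omega = 1 for every z.
   Next, Omega_A M has an idempotent e whose local monoid e Omega e is a group,
   i.e. (e s e)^omega = e for all s (an idempotent of the minimal ideal, built
   here as a limit of finite approximations). Sigma proves e = e^omega = 1, hence
   s = e s e. For each k, relate s and t when e s e and e t e are k-close to the
   two sides of a provable pseudoidentity; inverses in e Omega e make this a
   congruence, and its finite quotient satisfies Sigma. A pseudoidentity valid
   in [[Sigma]] thus holds in all these quotients, which exhibits e u e = e v e
   as a limit of provable pairs. *)

From mathcomp Require Import all_boot.
From Stdlib Require Import FunctionalExtensionality ProofIrrelevance ClassicalEpsilon Classical.
Set Implicit Arguments. Unset Strict Implicit. Unset Printing Implicit Defensive.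

Section FinitePowers.
Variable M : FinMon.
Implicit Types g x : M.

Definition fpow g n : M := iter n (fmul g) fone.

Lemma fpowS g n : fpow g n.+1 = fmul g (fpow g n). Proof. by []. Qed.

Lemma fpowD g m n : fpow g (m + n) = fmul (fpow g m) (fpow g n).
Proof. by elim: m => [|m IH]; rewrite ?fmul1m // addSn !fpowS IH fmulA. Qed.

Lemma fpow1 g : fpow g 1 = g. Proof. exact: fmulm1. Qed.

Lemma fpowSr g n : fpow g n.+1 = fmul (fpow g n) g.
Proof. by rewrite -addn1 fpowD fpow1. Qed.

Lemma fpowM g m n : fpow g (m * n) = fpow (fpow g m) n.
Proof. by elim: n => [|n IH]; rewrite ?muln0 // mulnS fpowD IH. Qed.

Lemma fpowC g m n : fmul (fpow g m) (fpow g n) = fmul (fpow g n) (fpow g m).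
Proof. by rewrite -!fpowD addnC. Qed.

Definition idem x := fmul x x = x.

Lemma fpow_idem x n : idem x -> 0 < n -> fpow x n = x.
Proof. move=> hx; elim: n => [//|[|n] IH _]; first exact: fpow1. by rewrite fpowS IH. Qed.

Lemma fpow_repeats g : exists i p, [/\ 0 < p, i + p <= #|M| & fpow g (i + p) = fpow g i].
Proof.
have /injectivePn [i [j neq_ij eq_ij]] : ~~ injectiveb (fun i : 'I_#|M|.+1 => fpow g i).
  by apply/injectiveP => /leq_card; rewrite card_ord ltnn.
have le_M (l : 'I_#|M|.+1) : l <= #|M| by rewrite -ltnS.
have found (a b : 'I_#|M|.+1) : a < b -> fpow g a = fpow g b ->
    exists i p, [/\ 0 < p, i + p <= #|M| & fpow g (i + p) = fpow g i].
  move=> lt_ab eq_ab; exists a, (b - a).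
  by rewrite subn_gt0 subnKC ?(ltnW lt_ab) ?le_M ?eq_ab.
case: (ltngtP i j) => [lt|gt|/val_inj eq]; [exact: found lt eq_ij | exact: found gt (esym eq_ij) |].
by rewrite eq eqxx in neq_ij.
Qed.

Lemma fpow_period g i p l t : fpow g (i + p) = fpow g i -> i <= l ->
  fpow g (l + p * t) = fpow g l.
Proof.
move=> per le_il; have per_t : fpow g (i + p * t) = fpow g i.
  elim: t => [|t IH]; first by rewrite muln0 addn0.
  by rewrite mulnS addnCA fpowD IH -fpowD addnC.
by rewrite -(subnK le_il) -addnA fpowD per_t -fpowD.
Qed.

Lemma idem_fpow_fact g j : #|M| <= j -> idem (fpow g j`!).
Proof.
move=> le_Mj; have [i [p [p_gt0 le_ipM per]]] := fpow_repeats g.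
have le_pj : p <= j by apply: leq_trans le_Mj; apply: leq_trans le_ipM; exact: leq_addl.
have le_ij : i <= j`! by apply: leq_trans (fact_geq j); apply: leq_trans le_Mj;
  apply: leq_trans le_ipM; exact: leq_addr.
have /dvdnP [t def_n] : p %| j`! by rewrite dvdn_fact ?p_gt0.
by rewrite /idem -fpowD {2}def_n mulnC (fpow_period _ per).
Qed.

Lemma idem_fpow_uniq g a b : 0 < a -> 0 < b -> idem (fpow g a) -> idem (fpow g b) ->
  fpow g a = fpow g b.
Proof.
move=> a_gt0 b_gt0 ida idb.
by rewrite -{1}(fpow_idem ida b_gt0) -fpowM mulnC fpowM fpow_idem.
Qed.
Lemma fpow_double_pred g a : 0 < a -> idem (fpow g a) ->
  fmul g (fpow g a.*2.-1) = fpow g a /\ fmul (fpow g a.*2.-1) (fpow g a) = fpow g a.*2.-1.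
Proof.
move=> a_gt0 ida; have a2_gt0 : 0 < a.*2 by rewrite double_gt0.
split; first by rewrite -fpowS prednK // -addnn fpowD.
have -> : a.*2.-1 = a.-1 + a by rewrite -(prednK a_gt0) doubleS -addnn addnS.
by rewrite -fpowD -addnA [fpow g (_ + (a + a))]fpowD [fpow g (a + a)]fpowD ida -fpowD.
Qed.

Lemma fpow_double_pred_uniq g a b : 0 < a -> 0 < b -> idem (fpow g a) -> idem (fpow g b) ->
  fpow g a.*2.-1 = fpow g b.*2.-1.
Proof.
move=> a_gt0 b_gt0 ida idb; have eq_ab := idem_fpow_uniq a_gt0 b_gt0 ida idb.
have [ga ag] := fpow_double_pred a_gt0 ida; have [gb bg] := fpow_double_pred b_gt0 idb.
by rewrite -ag eq_ab -{1}gb fmulA -fpowSr fpowS ga eq_ab fpowC bg.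
Qed.

Definition fomega g := fpow g #|M|`!.
Definition fomega1 g := fpow g (#|M|`!).*2.-1.

Lemma fomega_idem g : idem (fomega g).
Proof. exact: idem_fpow_fact. Qed.

Lemma fomega_id x : idem x -> fomega x = x.
Proof. by move=> idx; exact: fpow_idem idx (fact_gt0 _). Qed.

Lemma fomega1_r g : fmul g (fomega1 g) = fomega g.
Proof. exact: (fpow_double_pred (fact_gt0 _) (fomega_idem g)).1. Qed.

Lemma fomega1_l g : fmul (fomega1 g) g = fomega g.
Proof. by rewrite -{2}(fpow1 g) fpowC fpow1 fomega1_r. Qed.
End FinitePowers.

Section FiniteMorphisms.
Variables (M N : FinMon) (h : M -> N).
Hypothesis h_hom : is_mhom h.

Lemma mhom_fpow g n : h (fpow g n) = fpow (h g) n.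
Proof. by case: h_hom => h1 hM; elim: n => //= n IH; rewrite hM IH. Qed.

Lemma mhom_idem x : idem x -> idem (h x).
Proof. by case: h_hom => _ hM; rewrite /idem -hM => ->. Qed.

Lemma mhom_fomega g : h (fomega g) = fomega (h g).
Proof.
rewrite /fomega mhom_fpow; apply: idem_fpow_uniq (fact_gt0 _) (fact_gt0 _) _ (fomega_idem _).
by rewrite -mhom_fpow; apply/mhom_idem/fomega_idem.
Qed.

Lemma mhom_fomega1 g : h (fomega1 g) = fomega1 (h g).
Proof.
rewrite /fomega1 mhom_fpow.
apply: fpow_double_pred_uniq (fact_gt0 _) (fact_gt0 _) _ (fomega_idem _).
by rewrite -mhom_fpow; apply/mhom_idem/fomega_idem.
Qed.
End FiniteMorphisms.

Section LocalGroups.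
Variable F : FinMon.
Implicit Types e f x y : F.

Definition local_monoid e := [set x | fmul (fmul e x) e == x].

Lemma fomega_absorb e x : fmul e x = x -> fmul x e = x ->
  fmul e (fomega x) = fomega x /\ fmul (fomega x) e = fomega x.
Proof.
move=> ex xe; rewrite /fomega -(prednK (fact_gt0 #|F|)).
by split; [rewrite fpowS fmulA ex | rewrite fpowSr -fmulA xe].
Qed.

Lemma local_monoid_proper e f : idem e -> idem f -> fmul e f = f -> fmul f e = f -> f != e ->
  local_monoid f \proper local_monoid e.
Proof.
move=> ide idf ef fe neq_fe; apply/properP; split.
  apply/subsetP => x; rewrite !inE => /eqP fxf; apply/eqP.
  by rewrite -fxf -!fmulA fe !fmulA ef.
exists e; first by rewrite inE !ide.
by rewrite inE fe idf.
Qed.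

Lemma exists_local_group e : idem e -> exists f,
  [/\ idem f, fmul (fmul e f) e = f & forall y, fomega (fmul (fmul f y) f) = f].
Proof.
move: {2}#|_| (leqnn #|local_monoid e|) => n; elim: n e => [|n IH] e le_n ide.
  have : e \in local_monoid e by rewrite inE ide ide.
  by move: le_n; rewrite leqn0 => /eqP/cards0_eq->; rewrite inE.
have [group_e|] := classic (forall y, fomega (fmul (fmul e y) e) = e).
  by exists e; split; rewrite ?ide.
move=> /not_all_ex_not [y]; set f := fomega _ => neq_fe.
have [ef fe] : fmul e f = f /\ fmul f e = f.
  by apply: fomega_absorb; [rewrite !fmulA ide | rewrite -!fmulA ide].
have /proper_card lt_fe := local_monoid_proper ide (fomega_idem _) ef fe (introN eqP neq_fe).
have [g [idg fgf group_g]] := IH f (leq_trans lt_fe le_n) (fomega_idem _).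
by exists g; split; rewrite // -fgf !fmulA ef -!fmulA fe.
Qed.
End LocalGroups.

Definition classicb (P : Prop) : bool := if excluded_middle_informative P then true else false.

Lemma classicbP (P : Prop) : reflect P (classicb P).
Proof. by rewrite /classicb; case: excluded_middle_informative => p; constructor. Qed.

Section FiniteQuotient.
Context {S : Type} {op : S -> S -> S} {one : S}.
Context {opA : associative op} {op1s : left_id one op} {ops1 : right_id one op}.
Context {R : S -> S -> Prop} {X : finType} {code : S -> X}.
Context {R_sym : forall s t, R s t -> R t s}
        {R_trans : forall s t r, R s t -> R t r -> R s r}
        {R_op : forall s s' t t', R s s' -> R t t' -> R (op s t) (op s' t')}
        {R_code : forall s t, code s = code t -> R s t}.

Let R_refl s : R s s. Proof. exact: R_code. Qed.

(* Since R contains the kernel of code, the set of codes of the R-class of s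
   determines that class, so the classes form a finite type. *)
Definition qclass s : {set X} := [set x | classicb (exists2 t, R s t & x = code t)].

Lemma qclass_eq s t : qclass s = qclass t <-> R s t.
Proof.
split=> [eq_st | st].
  have : code t \in qclass t by rewrite inE; apply/classicbP; exists t; first exact: R_refl.
  rewrite -eq_st inE => /classicbP [t' st' /R_code tt'].
  exact: R_trans st' (R_sym tt').
apply/setP => x; rewrite !inE; apply/classicbP/classicbP => [[r sr ->]|[r tr ->]].
  by exists r => //; apply: R_trans (R_sym st) sr.
by exists r => //; apply: R_trans st tr.
Qed.

Definition quot_type := {C : {set X} | classicb (exists s, qclass s = C)}.

Definition qproj s : quot_type := exist _ (qclass s) (introT (classicbP _) (ex_intro _ s erefl)).

Definition qrep (q : quot_type) : S :=
  proj1_sig (constructive_indefinite_description _ (elimT (classicbP _) (valP q))).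

Lemma qrepK q : qproj (qrep q) = q.
Proof.
by apply: val_inj; rewrite /qrep /=; case: constructive_indefinite_description.
Qed.

Lemma qproj_eq s t : qproj s = qproj t <-> R s t.
Proof. by rewrite -qclass_eq; split=> [/(congr1 val)|eq_st]; last apply: val_inj. Qed.

Definition qmul q r := qproj (op (qrep q) (qrep r)).

Lemma qprojM s t : qproj (op s t) = qmul (qproj s) (qproj t).
Proof. by apply/qproj_eq; apply: R_op; apply/qproj_eq; rewrite qrepK. Qed.

Lemma qmulA : associative qmul.
Proof. by move=> q r p; rewrite -[q]qrepK -[r]qrepK -[p]qrepK -!qprojM opA. Qed.

Lemma qmul1m : left_id (qproj one) qmul.
Proof. by move=> q; rewrite -[q]qrepK -qprojM op1s. Qed.

Lemma qmulm1 : right_id (qproj one) qmul.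
Proof. by move=> q; rewrite -[q]qrepK -qprojM ops1. Qed.

Definition quotient : FinMon := Build_FinMon qmulA qmul1m qmulm1.

Definition quotient_proj s : quotient := qproj s.
Definition quotient_rep (q : quotient) : S := qrep q.

Lemma quotient_repK q : quotient_proj (quotient_rep q) = q.
Proof. exact: qrepK. Qed.

Lemma quotient_proj_eq s t : quotient_proj s = quotient_proj t <-> R s t.
Proof. exact: qproj_eq. Qed.

Lemma quotient_projM s t :
  quotient_proj (op s t) = fmul (quotient_proj s) (quotient_proj t).
Proof. exact: qprojM. Qed.

Lemma quotient_rep_eq s : R (quotient_rep (quotient_proj s)) s.
Proof. by apply/quotient_proj_eq; rewrite quotient_repK. Qed.
End FiniteQuotient.

Section ImplicitOperations.
Variable A : finType.
Implicit Types x y z : Omega A.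

Lemma Omega_ext x y : (forall M a, oev x M a = oev y M a) -> x = y.
Proof.
case: x y => [f fnat] [g gnat] /= eq_fg.
have eq_fg' : f = g.
  by apply: functional_extensionality_dep => M; apply: functional_extensionality.
by subst g; rewrite (proof_irrelevance _ fnat gnat).
Qed.

Lemma omulA x y z : omul x (omul y z) = omul (omul x y) z.
Proof. by apply: Omega_ext => M a; apply: fmulA. Qed.

Lemma omul1m x : omul (oone A) x = x.
Proof. by apply: Omega_ext => M a; apply: fmul1m. Qed.

Lemma omulm1 x : omul x (oone A) = x.
Proof. by apply: Omega_ext => M a; apply: fmulm1. Qed.

Lemma agree_le m n x y : m <= n -> agree n x y -> agree m x y.
Proof. by move=> le_mn xy M le_Mm; apply: xy; apply: leq_trans le_mn. Qed.

Lemma agree_refl m x : agree m x x.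
Proof. by []. Qed.

Lemma agree_sym m x y : agree m x y -> agree m y x.
Proof. by move=> xy M le_Mm a; rewrite xy. Qed.

Lemma agree_trans m x y z : agree m x y -> agree m y z -> agree m x z.
Proof. by move=> xy yz M le_Mm a; rewrite xy ?yz. Qed.

Lemma agree_omul m x x' y y' : agree m x x' -> agree m y y' ->
  agree m (omul x y) (omul x' y').
Proof. by move=> xx' yy' M le_Mm a /=; rewrite xx' ?yy'. Qed.

Lemma agree_all_eq x y : (forall m, agree m x y) -> x = y.
Proof. by move=> xy; apply: Omega_ext => M; apply: xy. Qed.

Lemma agree0 x y : agree 0 x y.
Proof. by move=> M; rewrite leqn0 => /eqP/card0_eq/(_ fone); rewrite inE. Qed.

Lemma agree_mhom k x y (M N : FinMon) (h : M -> N) (a : A -> M) :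
  agree k x y -> #|M| <= k -> is_mhom h -> oev x N (h \o a) = oev y N (h \o a).
Proof. by move=> xy le_Mk h_hom; rewrite -!onat // xy. Qed.

Lemma oomega_nat x (M N : FinMon) (h : M -> N) (a : A -> M) : is_mhom h ->
  h (fomega (oev x M a)) = fomega (oev x N (h \o a)).
Proof. by move=> h_hom; rewrite mhom_fomega // onat. Qed.

Lemma oomega1_nat x (M N : FinMon) (h : M -> N) (a : A -> M) : is_mhom h ->
  h (fomega1 (oev x M a)) = fomega1 (oev x N (h \o a)).
Proof. by move=> h_hom; rewrite mhom_fomega1 // onat. Qed.

Definition oomega x : Omega A := Build_Omega (@oomega_nat x).
Definition oomega1 x : Omega A := Build_Omega (@oomega1_nat x).

Lemma oomega_idem x : omul (oomega x) (oomega x) = oomega x.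
Proof. by apply: Omega_ext => M a; apply: fomega_idem. Qed.

Lemma oomega_id x : omul x x = x -> oomega x = x.
Proof.
move=> idx; apply: Omega_ext => M a; apply: fomega_id.
exact: (congr1 (fun z => oev z M a) idx).
Qed.

Lemma omul_oomega1 x : omul x (oomega1 x) = oomega x.
Proof. by apply: Omega_ext => M a; apply: fomega1_r. Qed.

Lemma oomega1_mul x : omul (oomega1 x) x = oomega x.
Proof. by apply: Omega_ext => M a; apply: fomega1_l. Qed.

Lemma agree_oomega m x y : agree m x y -> agree m (oomega x) (oomega y).
Proof. by move=> xy M le_Mm a /=; rewrite xy. Qed.

Lemma agree_oomega1 m x y : agree m x y -> agree m (oomega1 x) (oomega1 y).
Proof. by move=> xy M le_Mm a /=; rewrite xy. Qed.
End ImplicitOperations.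

Section Substitution.
Variables B A : finType.

Lemma gen_nat (b : B) (M N : FinMon) (h : M -> N) (a : B -> M) :
  is_mhom h -> h (a b) = (h \o a) b.
Proof. by []. Qed.

Definition gen (b : B) : Omega B := Build_Omega (@gen_nat b).

Definition word (w : seq B) : Omega B := foldr (@omul B) (oone B) (map gen w).

Lemma word_cat w1 w2 : word (w1 ++ w2) = omul (word w1) (word w2).
Proof. by elim: w1 => [|b w1 IH] /=; rewrite ?omul1m // /word /= -/(word _) IH omulA. Qed.

Variable g : B -> Omega A.

Lemma osubst_nat (x : Omega B) (M N : FinMon) (h : M -> N) (a : A -> M) : is_mhom h ->
  h (oev x M (fun b => oev (g b) M a)) = oev x N (fun b => oev (g b) N (h \o a)).
Proof.
by move=> h_hom; rewrite onat //; congr (oev x N); apply: functional_extensionality => b /=;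
  rewrite onat.
Qed.

Definition osubst (x : Omega B) : Omega A := Build_Omega (@osubst_nat x).

Lemma osubst_gen b : osubst (gen b) = g b.
Proof. exact: Omega_ext. Qed.

Lemma cont_hom_osubst : cont_hom osubst.
Proof.
split; first exact: Omega_ext.
split; first by move=> x y; apply: Omega_ext.
by move=> u n; exists n => u' uu' M le_Mn a; apply: uu'.
Qed.
End Substitution.

Lemma cont_hom_fin_comp (B A : finType) (T : FinMon) (phi : Omega B -> Omega A)
    (psi : Omega A -> T) :
  cont_hom phi -> cont_hom_fin psi -> cont_hom_fin (psi \o phi).
Proof.
move=> [phi1 [phiM phi_cont]] [psi1 [psiM psi_cont]]; split; first by rewrite /= phi1.
split; first by move=> x y /=; rewrite phiM psiM.
move=> u; have [m psi_m] := psi_cont (phi u); have [m' phi_m] := phi_cont u m.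
by exists m' => u' uu'; apply/psi_m/phi_m.
Qed.

Section Fingerprint.
Variable A : finType.

Definition table n := ({ffun 'I_n * 'I_n -> 'I_n} * 'I_n * {ffun A -> 'I_n})%type.

Definition table_monoid_axiom n (c : table n) : bool :=
  [&& [forall x, forall y, forall z, c.1.1 (x, c.1.1 (y, z)) == c.1.1 (c.1.1 (x, y), z)],
      [forall x, c.1.1 (c.1.2, x) == x] & [forall x, c.1.1 (x, c.1.2) == x]].

Section TableMonoid.
Variables (n : nat) (c : table n) (c_monoid : table_monoid_axiom c).

Definition tmul (x y : 'I_n) : 'I_n := c.1.1 (x, y).

Lemma tmulA : associative tmul.
Proof. by case/and3P: c_monoid => /'forall_'forall_'forall_eqP. Qed.

Lemma tmul1m : left_id c.1.2 tmul.
Proof. by case/and3P: c_monoid => _ /'forall_eqP. Qed.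

Lemma tmulm1 : right_id c.1.2 tmul.
Proof. by case/and3P: c_monoid => _ _ /'forall_eqP. Qed.

Definition table_monoid : FinMon := Build_FinMon tmulA tmul1m tmulm1.
End TableMonoid.

Variable k : nat.

Definition instance := {n : 'I_k.+1 & {c : table n | table_monoid_axiom c}}.

Definition inst_monoid (i : instance) : FinMon := table_monoid (valP (tagged i)).

Definition inst_val (i : instance) : A -> inst_monoid i := (val (tagged i)).2.

(* Values of x on every monoid structure on some 'I_n, n <= k, under every
   valuation: up to isomorphism these are all the finite monoids of size <= k. *)
Definition fingerprint (x : Omega A) : {dffun forall i : instance, inst_monoid i} :=
  [ffun i => oev x (inst_monoid i) (inst_val i)].

Lemma instance_of (M : FinMon) (a : A -> M) : #|M| <= k ->
  exists (i : instance) (h : inst_monoid i -> M), is_mhom h /\ a = h \o inst_val i.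
Proof.
move=> le_Mk; pose n : 'I_k.+1 := Ordinal (le_Mk : #|M| < k.+1).
pose c : table n := ([ffun p => enum_rank (fmul (enum_val p.1) (enum_val p.2))],
                     enum_rank (fone : M), [ffun b => enum_rank (a b)]).
have c_monoid : table_monoid_axiom c.
  apply/and3P; split.
  - by apply/'forall_'forall_'forall_eqP => x y z; rewrite !ffunE /= !enum_rankK fmulA.
  - by apply/'forall_eqP => x; rewrite ffunE /= enum_rankK fmul1m enum_valK.
  - by apply/'forall_eqP => x; rewrite ffunE /= enum_rankK fmulm1 enum_valK.
exists (existT _ n (exist _ c c_monoid)), enum_val; split.
  by split=> [|x y]; rewrite /= ?/tmul /= ?ffunE /= enum_rankK.
by apply: functional_extensionality => b; rewrite /= /inst_val /= ffunE enum_rankK.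
Qed.

Lemma fingerprint_eq x y : fingerprint x = fingerprint y <-> agree k x y.
Proof.
split=> [eq_xy M le_Mk a | xy].
  have [i [h [h_hom ->]]] := instance_of a le_Mk.
  by rewrite -!onat //; move/ffunP/(_ i): eq_xy; rewrite !ffunE => ->.
apply/ffunP => i; rewrite !ffunE; apply: xy.
by rewrite card_ord -ltnS ltn_ord.
Qed.
End Fingerprint.

Section Density.
Variables (B : finType) (k : nat).

Definition agree_words (w w' : seq B) := agree k (word w) (word w').

Lemma agree_words_cat w1 w1' w2 w2' : agree_words w1 w1' -> agree_words w2 w2' ->
  agree_words (w1 ++ w2) (w1' ++ w2').
Proof. by rewrite /agree_words !word_cat; apply: agree_omul. Qed.

Lemma agree_words_code w w' :
  fingerprint k (word w) = fingerprint k (word w') -> agree_words w w'.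
Proof. by move/fingerprint_eq. Qed.

Definition word_quotient : FinMon :=
  @quotient _ _ _ (@catA B) (@cat0s B) (@cats0 B) _ _ _
    (fun w w' => @agree_sym _ k (word w) (word w'))
    (fun w w' w'' => @agree_trans _ k (word w) (word w') (word w''))
    agree_words_cat agree_words_code.

Lemma words_dense (x : Omega B) : exists w : seq B, agree k x (word w).
Proof.
pose pi : seq B -> word_quotient := quotient_proj.
pose rep : word_quotient -> seq B := quotient_rep.
exists (rep (oev x word_quotient (fun b => pi [:: b]))) => M le_Mk a.
pose h q := oev (word (rep q)) M a.
have h_pi w : h (pi w) = oev (word w) M a.
  by have rep_w : agree_words (rep (pi w)) w := quotient_rep_eq w; apply: rep_w.
have h_hom : is_mhom h.
  split=> [|q r]; first exact: h_pi.
  by rewrite -[q]quotient_repK -[r]quotient_repK -quotient_projM !h_pi word_cat.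
have {1}-> : a = h \o (fun b => pi [:: b]).
  by apply: functional_extensionality => b; rewrite /= h_pi /= fmulm1.
by rewrite -onat.
Qed.
End Density.

Section Determination.
Variables (B : finType) (T : FinMon) (phi : Omega B -> T).
Hypothesis phi_hom : cont_hom_fin phi.

Lemma cont_hom_fin_word w : phi (word w) = oev (word w) T (phi \o @gen B).
Proof.
case: phi_hom => phi1 [phiM _]; elim: w => [|b w IH] //=.
by rewrite /word /= -/(word w) phiM IH.
Qed.

Lemma cont_hom_finE x : phi x = oev x T (phi \o @gen B).
Proof.
case: phi_hom => _ [_ phi_cont]; have [m phi_m] := phi_cont x.
have [w xw] := words_dense (maxn m #|T|) x.
rewrite (phi_m (word w)); last by apply: agree_le xw; apply: leq_maxl.
by rewrite cont_hom_fin_word; symmetry; apply: xw; apply: leq_maxr.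
Qed.

Lemma cont_hom_fin_oomega x : phi (oomega x) = fomega (phi x).
Proof. by rewrite !cont_hom_finE. Qed.
End Determination.

Lemma cont_hom_fin_osubst (B A : finType) (T : FinMon) (g : B -> Omega A)
    (psi : Omega A -> T) x :
  cont_hom_fin psi -> psi (osubst g x) = oev x T (psi \o g).
Proof.
move=> psi_hom; have := cont_hom_fin_comp (cont_hom_osubst g) psi_hom.
move/cont_hom_finE => /= ->; congr (oev x T).
by apply: functional_extensionality => b /=; rewrite osubst_gen.
Qed.

Lemma cont_hom_fin_oev (B : finType) (T : FinMon) (a : B -> T) :
  cont_hom_fin (fun x => oev x T a).
Proof. by split=> //; split=> // u; exists #|T| => u' uu'; apply: uu'. Qed.

Lemma holds_inE (T : FinMon) (B : finType) (u v : Omega B) :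
  holds_in T u v <-> forall a : B -> T, oev u T a = oev v T a.
Proof.
split=> [uv a | uv phi phi_hom]; first exact: uv (cont_hom_fin_oev a).
by rewrite !(cont_hom_finE phi_hom).
Qed.

Lemma nat_dependent_choice (T : Type) (P : nat -> T -> Prop) (Q : nat -> T -> T -> Prop) x0 :
  P 0 x0 -> (forall k x, P k x -> exists y, P k.+1 y /\ Q k y x) ->
  exists f : nat -> T, forall k, P k (f k) /\ Q k (f k.+1) (f k).
Proof.
move=> P0 step.
pose next k (p : {x | P k x}) := constructive_indefinite_description _ (step k _ (svalP p)).
pose fix chain k : {x | P k x} :=
  if k is k'.+1 then exist _ (sval (next k' (chain k'))) (proj1 (svalP (next k' (chain k'))))
  else exist _ x0 P0.
by exists (fun k => sval (chain k)) => k; split; [apply: svalP | apply: (svalP (next k _)).2].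
Qed.

Section Completeness.
Variables (A : finType) (f : nat -> Omega A).
Hypothesis f_cauchy : forall k, agree k (f k.+1) (f k).

Lemma cauchy_agree k j : k <= j -> agree k (f j) (f k).
Proof.
elim: j => [|j IH]; first by rewrite leqn0 => /eqP ->.
rewrite leq_eqVlt ltnS => /orP [/eqP -> // | le_kj].
exact: agree_trans (agree_le le_kj (@f_cauchy j)) (IH le_kj).
Qed.

Lemma cauchy_lim_nat (M N : FinMon) (h : M -> N) (a : A -> M) : is_mhom h ->
  h (oev (f #|M|) M a) = oev (f #|N|) N (h \o a).
Proof.
move=> h_hom; rewrite onat //; case: (leqP #|M| #|N|) => [le_MN | /ltnW le_NM].
  exact: agree_mhom (agree_sym (cauchy_agree le_MN)) (leqnn _) h_hom.
exact: cauchy_agree le_NM _ (leqnn _) _.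
Qed.

Definition cauchy_lim : Omega A := Build_Omega cauchy_lim_nat.

Lemma cauchy_limP k : agree k cauchy_lim (f k).
Proof. by move=> M le_Mk a; apply: (agree_sym (cauchy_agree le_Mk)). Qed.
End Completeness.

Section LevelQuotient.
Variables (A : finType) (k : nat).

Definition level_quotient : FinMon :=
  @quotient _ _ _ (@omulA A) (@omul1m A) (@omulm1 A) (agree k) _ (fingerprint k)
    (@agree_sym A k) (@agree_trans A k) (@agree_omul A k)
    (fun x y => proj1 (fingerprint_eq k x y)).

Definition level_proj : Omega A -> level_quotient := quotient_proj.

Lemma level_proj_eq x y : level_proj x = level_proj y <-> agree k x y.
Proof. exact: quotient_proj_eq. Qed.

Lemma cont_hom_fin_level_proj : cont_hom_fin level_proj.
Proof.
split=> //; split; first exact: quotient_projM.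
by move=> x; exists k => x' xx'; apply/level_proj_eq.
Qed.
End LevelQuotient.

Section LocalGroupIdempotent.
Variable A : finType.
Implicit Types e s : Omega A.

Definition sandwich e s := omul (omul e s) e.

Lemma agree_sandwich k e e' s s' : agree k e e' -> agree k s s' ->
  agree k (sandwich e s) (sandwich e' s').
Proof. by move=> ee' ss'; apply: agree_omul (agree_omul ee' ss') ee'. Qed.

Definition local_group_upto k e :=
  omul e e = e /\ forall s, agree k (oomega (sandwich e s)) e.

Lemma local_group_upto_step k e : local_group_upto k e ->
  exists e', local_group_upto k.+1 e' /\ agree k e' e.
Proof.
move=> [ide group_e]; pose pi := @level_proj A k.+1.
have pi_hom : cont_hom_fin pi := @cont_hom_fin_level_proj A k.+1; case: (pi_hom) => _ [piM _].
have id_pi_e : idem (pi e) by rewrite /idem -piM ide.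
have [f [idf efe group_f]] := exists_local_group id_pi_e.
pose s := quotient_rep f : Omega A.
have pi_s : pi s = f by apply: quotient_repK.
have pi_e' : pi (oomega (sandwich e s)) = f.
  by rewrite (cont_hom_fin_oomega pi_hom) !piM pi_s efe fomega_id.
exists (oomega (sandwich e s)); split; last exact: group_e.
split=> [|t]; first exact: oomega_idem.
by apply/level_proj_eq; rewrite -/pi (cont_hom_fin_oomega pi_hom) /sandwich !piM pi_e' group_f.
Qed.

Lemma exists_local_group_idempotent :
  exists e, omul e e = e /\ forall s, oomega (sandwich e s) = e.
Proof.
have start : local_group_upto 0 (oone A) by split=> [|s]; [exact: omul1m | exact: agree0].
have [f f_chain] := nat_dependent_choice start local_group_upto_step.
have f_cauchy k : agree k (f k.+1) (f k) by case: (f_chain k).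
pose e := cauchy_lim f_cauchy; have eP k : agree k e (f k) := cauchy_limP f_cauchy (k := k).
exists e; split=> [|s]; apply: agree_all_eq => k; have [[idf group_f] _] := f_chain k.
  by apply: (agree_trans _ (agree_sym (eP k))); rewrite -idf; apply: agree_omul.
apply: (agree_trans _ (agree_sym (eP k))); apply: (agree_trans _ (group_f s)).
exact/agree_oomega/agree_sandwich/agree_refl.
Qed.
End LocalGroupIdempotent.

Section TermContexts.
Variable A : finType.
Implicit Types (x r : Omega A) (w : seq (Omega A)) (t : seq nat).

(* Variable 0 of a term stands for the instantiated side of the pseudoidentity;
   inserting a new parameter in front of the others shifts their indices. *)
Definition shift_var (i : nat) := if i is 0 then 0 else i.+1.

Lemma nth_shift_var x r w i : nth x (x :: r :: w) (shift_var i) = nth x (x :: w) i.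
Proof. by case: i. Qed.

Lemma omul_eval_term r t x w :
  omul r (eval_term t x w) = eval_term (1 :: map shift_var t) x (r :: w).
Proof.
rewrite /eval_term /= -map_comp; congr (omul r (foldr _ _ _)).
by apply: eq_map => i /=; rewrite nth_shift_var.
Qed.

Lemma eval_term_omul r t x w :
  omul (eval_term t x w) r = eval_term (map shift_var t ++ [:: 1]) x (r :: w).
Proof.
rewrite /eval_term map_cat -map_comp /= (eq_map (nth_shift_var x r w)).
by elim: (map _ t) => [|y l IH] /=; rewrite ?omul1m ?omulm1 // -omulA IH.
Qed.
End TermContexts.

Section ProvableInduction.
Variables (Sigma : pseudoidentities) (A : finType) (P : Omega A -> Omega A -> Prop).
Hypothesis P_base : forall p q, Sigma0 Sigma p q -> P p q.
Hypothesis P_trans : forall p q r, P p q -> P q r -> P p r.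
Hypothesis P_closure : forall p q,
  (forall m, exists p' q', P p' q' /\ agree m p p' /\ agree m q q') -> P p q.

(* The generated induction principle gives no hypothesis on the approximants
   in [prov_closure]. *)
Fixpoint provable_strong_ind p q (pq : provable Sigma p q) {struct pq} : P p q :=
  match pq with
  | prov_base p q base => P_base base
  | prov_trans p q r pq qr => P_trans (provable_strong_ind pq) (provable_strong_ind qr)
  | prov_closure p q approx => P_closure (fun m =>
      let: ex_intro p' (ex_intro q' (conj pq' agree_pq)) := approx m in
      ex_intro _ p' (ex_intro _ q' (conj (provable_strong_ind pq') agree_pq)))
  end.
End ProvableInduction.

Section Provability.
Variable Sigma : pseudoidentities.
Local Notation prov := (provable Sigma).

Lemma provable_sym (A : finType) (p q : Omega A) : prov p q -> prov q p.
Proof.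
elim/provable_strong_ind => {p q} [p q [B [u [v [phi [t [w [uv [phi_hom [-> ->]]]]]]]]]||].
- by apply: prov_base; exists B, v, u, phi, t, w; rewrite or_comm.
- by move=> p q r qp rq; apply: prov_trans rq qp.
- move=> p q approx; apply: prov_closure => m.
  by have [p' [q' [qp' [pp' qq']]]] := approx m; exists q', p'.
Qed.

Lemma provable_map (A A' : finType) (f : Omega A -> Omega A') (p q : Omega A) :
  (forall p q, Sigma0 Sigma p q -> prov (f p) (f q)) ->
  (forall m p p', agree m p p' -> agree m (f p) (f p')) ->
  prov p q -> prov (f p) (f q).
Proof.
move=> f_base f_agree; elim/provable_strong_ind => {p q} [p q /f_base //||].
  by move=> p q r; apply: prov_trans.
move=> p q approx; apply: prov_closure => m.
have [p' [q' [pq' [pp' qq']]]] := approx m.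
by exists (f p'), (f q'); split=> //; split; apply: f_agree.
Qed.

Lemma provable_mull (A : finType) (r p q : Omega A) : prov p q -> prov (omul r p) (omul r q).
Proof.
apply: provable_map.
  move=> {}p {}q [B [u [v [phi [t [w [uv [phi_hom [-> ->]]]]]]]]].
  apply: prov_base; exists B, u, v, phi, (1 :: map shift_var t), (r :: w).
  by rewrite !omul_eval_term.
by move=> m p1 p2 pp; apply: agree_omul pp; apply: agree_refl.
Qed.

Lemma provable_mulr (A : finType) (r p q : Omega A) : prov p q -> prov (omul p r) (omul q r).
Proof.
apply: (provable_map (f := fun x => omul x r)).
  move=> {}p {}q [B [u [v [phi [t [w [uv [phi_hom [-> ->]]]]]]]]].
  apply: prov_base; exists B, u, v, phi, (map shift_var t ++ [:: 1]), (r :: w).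
  by rewrite !eval_term_omul.
by move=> m p1 p2 pp; apply: agree_omul pp _; apply: agree_refl.
Qed.

Lemma provable_mul (A : finType) (p q p' q' : Omega A) :
  prov p q -> prov p' q' -> prov (omul p p') (omul q q').
Proof. by move=> pq pq'; apply: prov_trans (provable_mulr p' pq) (provable_mull q pq'). Qed.

Lemma provable_inst (B A : finType) (u v : Omega B) (phi : Omega B -> Omega A) :
  @Sigma B u v -> cont_hom phi -> prov (phi u) (phi v).
Proof.
move=> uv phi_hom; apply: prov_base; exists B, u, v, phi, [:: 0], [::].
by rewrite /eval_term /= !omulm1; split; first left.
Qed.
End Provability.

Section GroupIdentity.
Variable Sigma : pseudoidentities.
Local Notation prov := (provable Sigma).
Hypothesis provable_oomega : forall (A : finType) (z : Omega A), prov (oomega z) (oone A).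

Lemma provable_refl (A : finType) (p : Omega A) : prov p p.
Proof.
have one_one : prov (oone A) (oone A).
  by rewrite -{1}(oomega_id (omul1m (oone A))); apply: provable_oomega.
by have := provable_mull p one_one; rewrite omulm1.
Qed.

Section LocalGroup.
Variables (A : finType) (e : Omega A).
Hypotheses (ide : omul e e = e) (group_e : forall s, oomega (sandwich e s) = e).

Lemma provable_e1 : prov e (oone A).
Proof. by rewrite -{1}(oomega_id ide); apply: provable_oomega. Qed.

Lemma provable_sandwich s : prov (sandwich e s) s.
Proof.
rewrite -[s in prov _ s]omul1m -[s in prov _ s]omulm1.
by apply: provable_mul provable_e1; apply: provable_mul provable_e1 (provable_refl s).
Qed.

Lemma sandwich_mul s s' : sandwich e (omul (omul s e) s') = omul (sandwich e s) (sandwich e s').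
Proof. by rewrite /sandwich !omulA -[omul (omul (omul e s) e) e]omulA ide. Qed.

Section Level.
Variable k : nat.

Definition near_provable s t :=
  exists p q, [/\ prov p q, agree k (sandwich e s) p & agree k (sandwich e t) q].

Lemma near_provable_code s t :
  fingerprint k (sandwich e s) = fingerprint k (sandwich e t) -> near_provable s t.
Proof.
by move/fingerprint_eq => st; exists (sandwich e s), (sandwich e s); split;
  [apply: provable_refl | apply: agree_refl | apply: agree_sym].
Qed.

Lemma near_provable_sym s t : near_provable s t -> near_provable t s.
Proof. by move=> [p [q [pq sp tq]]]; exists q, p; split=> //; apply: provable_sym. Qed.

Lemma near_provable_of_provable s t : prov s t -> near_provable s t.
Proof.
move=> st; exists (sandwich e s), (sandwich e t).
by split; [apply/provable_mulr/provable_mull | apply: agree_refl | apply: agree_refl].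
Qed.

(* The topological closure of a transitive relation need not be transitive;
   here approximants can be chained since they are divided inside the group
   e Omega e: p1 q1^(omega-1) p2 is close to (e s e) (e t e)^(omega-1) (e t e). *)
Lemma near_provable_trans s t r : near_provable s t -> near_provable t r -> near_provable s r.
Proof.
move=> [p1 [q1 [pq1 sp1 tq1]]] [p2 [q2 [pq2 tp2 rq2]]].
exists (omul (omul p1 (oomega1 q1)) p2), q2; split=> //.
  apply: prov_trans pq2; apply: prov_trans (provable_mulr _ (provable_mulr _ pq1)) _.
  rewrite omul_oomega1 -{2}[p2]omul1m; exact/provable_mulr/provable_oomega.
have -> : sandwich e s = omul (omul (sandwich e s) (oomega1 (sandwich e t))) (sandwich e t).
  by rewrite -omulA oomega1_mul group_e /sandwich -[RHS]omulA ide.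
by apply/agree_omul/tp2/agree_omul/agree_oomega1.
Qed.

Lemma near_provable_mul s s' t t' : near_provable s s' -> near_provable t t' ->
  near_provable (omul s t) (omul s' t').
Proof.
have insert_e x y : near_provable (omul x y) (omul (omul x e) y).
  apply: near_provable_of_provable; rewrite -{1}[x]omulm1.
  exact/provable_mulr/provable_mull/provable_sym/provable_e1.
move=> [p [p' [pp' sp s'p']]] [q [q' [qq' tq t'q']]].
apply: near_provable_trans (insert_e s t) _.
apply: near_provable_trans (near_provable_sym (insert_e s' t')).
exists (omul p q), (omul p' q'); rewrite !sandwich_mul.
by split; [apply: provable_mul | apply: agree_omul | apply: agree_omul].
Qed.

Definition sandwich_quotient : FinMon :=
  @quotient _ _ _ (@omulA A) (@omul1m A) (@omulm1 A) near_provable _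
    (fun s => fingerprint k (sandwich e s))
    near_provable_sym near_provable_trans near_provable_mul near_provable_code.

Definition sandwich_proj : Omega A -> sandwich_quotient := quotient_proj.

Lemma sandwich_proj_eq s t : sandwich_proj s = sandwich_proj t <-> near_provable s t.
Proof. exact: quotient_proj_eq. Qed.

Lemma cont_hom_fin_sandwich_proj : cont_hom_fin sandwich_proj.
Proof.
split=> //; split; first exact: quotient_projM.
move=> s; exists k => s' ss'; apply/sandwich_proj_eq; exists (sandwich e s), (sandwich e s).
by split; [apply: provable_refl | apply: agree_refl | apply/agree_sandwich/agree_sym].
Qed.

Lemma sandwich_quotient_models : models Sigma sandwich_quotient.
Proof.
move=> B u v uv; apply/holds_inE => a.
pose g b : Omega A := quotient_rep (a b).
have -> : a = sandwich_proj \o g.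
  by apply: functional_extensionality => b; rewrite /= /sandwich_proj quotient_repK.
rewrite -!(cont_hom_fin_osubst _ _ cont_hom_fin_sandwich_proj); apply/sandwich_proj_eq.
exact/near_provable_of_provable/provable_inst/cont_hom_osubst.
Qed.
End Level.

Lemma provable_of_valid (u v : Omega A) :
  (forall T : FinMon, models Sigma T -> holds_in T u v) -> prov u v.
Proof.
move=> valid; apply: prov_trans (provable_sym (provable_sandwich u)) _.
apply: prov_trans (provable_sandwich v); apply: prov_closure => k.
have /sandwich_proj_eq [p [q [pq up vq]]] :=
  valid _ (sandwich_quotient_models (k := k)) _ (cont_hom_fin_sandwich_proj k).
by exists p, q.
Qed.
End LocalGroup.

Lemma h_strong_of_provable_oomega : h_strong Sigma.
Proof.
move=> A u v; have [e [ide group_e]] := exists_local_group_idempotent A.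
exact: provable_of_valid ide group_e u v.
Qed.
End GroupIdentity.

Definition U1 : FinMon := Build_FinMon andbA andTb andbT.

Lemma U1_not_group : ~ is_group U1.
Proof. by move/(_ false) => [y []]. Qed.

Lemma U1_mhom (M : FinMon) (x : M) : idem x -> is_mhom (fun b : U1 => if b then fone else x).
Proof. by move=> idx; split=> // [[] []] /=; rewrite ?fmul1m ?fmulm1. Qed.

Lemma provable_oomega_of_U1 (Sigma : pseudoidentities) (B : finType) (u v : Omega B)
    (c : B -> U1) :
  Sigma B u v -> oev u U1 c <> oev v U1 c ->
  forall (A : finType) (z : Omega A), provable Sigma (oomega z) (oone A).
Proof.
move=> uv neq_uv A z; pose g b := if c b then oone A else oomega z.
have osubst_g x : osubst g x = if oev x U1 c then oone A else oomega z.
  apply: Omega_ext => M a /=; have h_hom := U1_mhom (fomega_idem (oev z M a)).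
  have -> : (fun b => oev (g b) M a) = (fun b : U1 => if b then fone else fomega (oev z M a)) \o c.
    by apply: functional_extensionality => b; rewrite /g /=; case: (c b).
  by rewrite -onat //; case: (oev x U1 c).
have := provable_inst uv (cont_hom_osubst g); rewrite !osubst_g.
by move: neq_uv; case: (oev u U1 c); case: (oev v U1 c) => // _ /provable_sym.
Qed.

Lemma not_models_U1 (Sigma : pseudoidentities) : ~ models Sigma U1 ->
  exists (B : finType) (u v : Omega B) (c : B -> U1), Sigma B u v /\ oev u U1 c <> oev v U1 c.
Proof.
move=> not_models; apply: NNPP => none; apply: not_models => B u v uv.
by apply/holds_inE => c; apply: NNPP => neq_uv; apply: none; exists B, u, v, c.
Qed.

Theorem corollary8p4 (Sigma : pseudoidentities) :
  (forall T : FinMon, models Sigma T -> is_group T) -> h_strong Sigma.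
Proof.
move=> groups; have /not_models_U1 [B [u [v [c [uv neq_uv]]]]] : ~ models Sigma U1.
  by move/groups; apply: U1_not_group.
exact/h_strong_of_provable_oomega/(provable_oomega_of_U1 uv neq_uv).
Qed.
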